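(* Let $f,g:\mathbb{R}^n\to[0,+\infty)$ and $h_1,h_2:\mathbb{R}^n\to\mathbb{R}$, let $C\subseteq\mathbb{R}^n$ be closed and convex, $\Omega:=\{x\in\mathbb{R}^n:g(x)\neq0\}$, $C\cap\Omega\neq\emptyset$, and assume: $f$ is convex; $g$ is differentiable with locally Lipschitz gradient on $\mathbb{R}^n$; $h_1$ is differentiable with locally Lipschitz gradient on $\mathbb{R}^n$; $h_2$ is convex. If $x^\star$ is a local minimizer of the problem $\min\{f^2(x)/g(x)+h_1(x)-h_2(x):x\in C\cap\Omega\}$, then with $c_\star=f(x^\star)/g(x^\star)$ it holds that $$0\in\partial(2c_\star f+\iota_C)(x^\star)-c_\star^2\nabla g(x^\star)+\nabla h_1(x^\star)-\partial h_2(x^\star).$$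
   Context: $\iota_C$ is the indicator function of $C$ ($0$ on $C$, $+\infty$ off $C$). $\partial$ denotes the limiting (Mordukhovich) subdifferential, which coincides with the convex subdifferential for convex functions. *)

From HB Require Import structures.
From mathcomp Require Import all_boot all_order all_algebra.
From mathcomp Require Import all_classical all_reals all_analysis.
Set Implicit Arguments. Unset Strict Implicit. Unset Printing Implicit Defensive.
Import Order.TTheory GRing.Theory Num.Theory.
Import numFieldNormedType.Exports.
Local Open Scope classical_set_scope.
Local Open Scope ring_scope.

Section Defs.
Variables (R : realType) (n : nat).
Notation V := 'rV[R]_n.

Definition dotp (u v : V) : R := \sum_(i < n) u ord0 i * v ord0 i.

Definition grad (f : V -> R) (x : V) : V :=
  \row_(i < n) ('D_(delta_mx ord0 i) f x).

Definition convex_setR (C : set V) : Prop :=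
  forall x y (t : R), C x -> C y -> 0 <= t -> t <= 1 ->
    C (t *: x + (1 - t) *: y).

Definition convex_funR (f : V -> R) : Prop :=
  forall x y (t : R), 0 <= t -> t <= 1 ->
    f (t *: x + (1 - t) *: y) <= t * f x + (1 - t) * f y.

Definition locally_lipschitz (F : V -> V) : Prop :=
  forall x : V, exists2 r : R, 0 < r & exists L : R,
    forall y z : V, `|y - x| < r -> `|z - x| < r ->
      `|F y - F z| <= L * `|y - z|.

(* convex subdifferential of the (extended-valued) function phi + iota_C
   at x, where phi is real valued: empty if x is not in C, else the set of
   v with  phi y + iota_C y >= phi x + <v, y - x>  for all y, i.e. for all
   y in C (the inequality is trivial off C, where the LHS is +oo). *)
Definition subdiff_plus_ind (phi : V -> R) (C : set V) (x : V) : set V :=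
  [set v | C x /\ forall y, C y -> phi x + dotp v (y - x) <= phi y].

Definition subdiff (h : V -> R) (x : V) : set V :=
  [set v | forall y, h x + dotp v (y - x) <= h y].

End Defs.

From HB Require Import structures.
From mathcomp Require Import all_boot all_order all_algebra.
From mathcomp Require Import all_classical all_reals all_analysis.
From mathcomp Require Import lra ring.
Set Implicit Arguments.
Unset Strict Implicit.
Unset Printing Implicit Defensive.
Import Order.TTheory GRing.Theory Num.Theory.
Import numFieldNormedType.Exports.
Local Open Scope classical_set_scope.
Local Open Scope ring_scope.

(* A subgradient w of h2 at xs exists: a linear minorant of a convex function
   vanishing at 0 is extended one coordinate at a time, the new slope being
   squeezed between the chord slopes on both sides (finite-dimensional
   Hahn-Banach).  With cs = f xs / g xs,
     f^2/g = 2 cs f - cs^2 g + (f - cs g)^2/g,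
   and the last term vanishes at xs.  Along z_t = xs + t (y - xs) with y in C,
   local minimality, convexity of f and the subgradient inequality for h2 give
     0 <= t (2 cs (f y - f xs) - <w, y - xs>) - cs^2 (g z_t - g xs)
          + (h1 z_t - h1 xs) + O(t^2),
   the remainder being O(t^2) because f and g have bounded difference
   quotients along the segment.  Dividing by t and letting t -> 0+ gives the
   subgradient inequality of 2 cs f + iota_C at xs for
   u = cs^2 grad g - grad h1 + w. *)

Section DotProduct.
Variables (R : realType) (n : nat).
Implicit Types u v z : 'rV[R]_n.

Lemma dotpC u v : dotp u v = dotp v u.
Proof. by apply: eq_bigr => i _; rewrite mulrC. Qed.

Lemma dotpDr u v z : dotp u (v + z) = dotp u v + dotp u z.
Proof. by rewrite /dotp -big_split; apply: eq_bigr => i _; rewrite mxE mulrDr. Qed.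

Lemma dotpZr u v a : dotp u (a *: v) = a * dotp u v.
Proof. by rewrite /dotp mulr_sumr; apply: eq_bigr => i _; rewrite mxE mulrCA. Qed.

Lemma dotpDl u v z : dotp (v + z) u = dotp v u + dotp z u.
Proof. by rewrite dotpC dotpDr !(dotpC u). Qed.

Lemma dotpZl u v a : dotp (a *: v) u = a * dotp v u.
Proof. by rewrite dotpC dotpZr dotpC. Qed.

Lemma dotpNl u v : dotp (- v) u = - dotp v u.
Proof. by rewrite -scaleN1r dotpZl mulN1r. Qed.

Lemma dotp0r u : dotp u 0 = 0.
Proof. by rewrite /dotp big1 // => i _; rewrite mxE mulr0. Qed.

Lemma dotp_delta u j : dotp u (delta_mx 0 j) = u 0 j.
Proof.
rewrite /dotp (bigD1 j) //= big1 => [|i /negbTE nij].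
  by rewrite !mxE !eqxx mulr1 addr0.
by rewrite !mxE eq_sym nij andbF mulr0.
Qed.

End DotProduct.

Lemma derive_grad (R : realType) (n : nat) (g : 'rV[R]_n -> R) x d :
  differentiable g x -> 'D_d g x = dotp (grad g x) d.
Proof.
move=> dg; rewrite deriveE // {1}(row_sum_delta d) linear_sum /dotp.
by apply: eq_bigr => i _; rewrite linearZ /= mxE deriveE // mulrC.
Qed.

Lemma slope_le_of_mix (R : realFieldType) (a b A B s t : R) : 0 < s -> 0 < t ->
  s * a + t * b <= s * A + t * B -> (b - B) / s <= (A - a) / t.
Proof.
move=> s0 t0 mix; rewrite ler_pdivlMr // mulrAC ler_pdivrMr //.
rewrite !mulrBl [b * t]mulrC [B * t]mulrC [A * s]mulrC [a * s]mulrC; lra.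
Qed.

Section ConvexMinorant.
Variables (R : realType) (n : nat) (q : 'rV[R]_n -> R).
Hypothesis q_convex : convex_funR q.

Definition supported_below (k : nat) (d : 'rV[R]_n) :=
  forall i : 'I_n, (k <= i)%N -> d 0 i = 0.

Lemma supported_below_mix k a b m m' :
  supported_below k m -> supported_below k m' -> supported_below k (a *: m + b *: m').
Proof. by move=> sm sm' i ki; rewrite !mxE sm // sm' // !mulr0 addr0. Qed.

Lemma supported_below_split k (kn : (k < n)%N) d : supported_below k.+1 d ->
  supported_below k (d - d 0 (Ordinal kn) *: delta_mx 0 (Ordinal kn)).
Proof.
move=> sd i ki; rewrite !mxE eqxx /=.
have [ki'|ik] := leqP k.+1 i.
  case: eqP => [ik|_]; first by rewrite ik /= ltnn in ki'.
  by rewrite sd // mulr0 subrr.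
have -> : i = Ordinal kn by apply/val_inj/eqP; rewrite /= eqn_leq ki -ltnS ik.
by rewrite eqxx mulr1 subrr.
Qed.

(* The [e]-components cancel in the mixture with weights [s : t], leaving a
   point where [w] is already known to be a minorant. *)
Lemma minorant_slope_le k w (e : 'rV[R]_n) m m' (s t : R) :
  (forall d, supported_below k d -> dotp w d <= q d) ->
  supported_below k m -> supported_below k m' -> 0 < s -> 0 < t ->
  (dotp w m' - q (m' - s *: e)) / s <= (q (m + t *: e) - dotp w m) / t.
Proof.
move=> w_min sm sm' s0 t0; apply: slope_le_of_mix => //.
have st0 : 0 < s + t by rewrite addr_gt0.
pose l := s / (s + t).
have l1 : 1 - l = t / (s + t).
  by apply/eqP; rewrite subr_eq -mulrDl addrC divff // gt_eqF.
have mixE : l *: (m + t *: e) + (1 - l) *: (m' - s *: e) = l *: m + (1 - l) *: m'.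
  rewrite l1 !scalerDr !scalerN !scalerA addrACA.
  by rewrite /l mulrAC [t / _ * s]mulrAC [t * s]mulrC subrr addr0.
have := @q_convex (m + t *: e) (m' - s *: e) l (divr_ge0 (ltW s0) (ltW st0)).
rewrite ler_pdivrMr // mul1r lerDl (ltW t0) mixE => /(_ isT) qmix.
have := le_trans (w_min _ (supported_below_mix l (1 - l) sm sm')) qmix.
by rewrite dotpDr !dotpZr l1 /l !(mulrAC _ (s + t)^-1) -!mulrDl ler_pM2r ?invr_gt0.
Qed.

Lemma minorant_extend k (kn : (k < n)%N) w :
  (forall d, supported_below k d -> dotp w d <= q d) ->
  exists w', forall d, supported_below k.+1 d -> dotp w' d <= q d.
Proof.
move=> w_min; pose e : 'rV[R]_n := delta_mx 0 (Ordinal kn).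
pose L := [set a | exists m (s : R), [/\ supported_below k m, 0 < s &
                                   a = (dotp w m - q (m - s *: e)) / s]].
have L_le m (t a : R) : supported_below k m -> 0 < t -> L a ->
    a <= (q (m + t *: e) - dotp w m) / t.
  by move=> sm t0 [m' [s [sm' s0 ->]]]; exact: (minorant_slope_le e w_min sm sm' s0 t0).
have supp0 : supported_below k 0 by move=> i _; rewrite mxE.
have L_ne : L !=set0 by exists ((dotp w 0 - q (0 - 1 *: e)) / 1), 0, 1.
have L_ub : has_ubound L by exists ((q (0 + 1 *: e) - dotp w 0) / 1); move=> b; exact: L_le.
pose a := sup L.
exists (w + (a - w 0 (Ordinal kn)) *: e) => d sd.
pose t := d 0 (Ordinal kn).
have [m sm dE] : exists2 m, supported_below k m & d = m + t *: e.
  by exists (d - t *: e); [exact: supported_below_split | rewrite subrK].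
have dotp_em : dotp e m = 0 by rewrite dotpC dotp_delta sm.
have dotp_ee : dotp e e = 1 by rewrite dotp_delta !mxE !eqxx.
have -> : dotp (w + (a - w 0 (Ordinal kn)) *: e) d = dotp w m + a * t.
  by rewrite dE !dotpDl !dotpDr !dotpZl !dotpZr dotp_em dotp_ee dotp_delta; ring.
rewrite dE; have [t_lt0|t_gt0|->] := ltgtP t 0.
- have La : L ((dotp w m - q (m - (- t) *: e)) / - t).
    by exists m, (- t); rewrite oppr_gt0.
  have := ub_le_sup L_ub La.
  by rewrite ler_pdivrMr ?oppr_gt0 // scaleNr opprK mulrN -/a; lra.
- have : a <= (q (m + t *: e) - dotp w m) / t.
    by apply: ge_sup => // b; exact: L_le.
  by rewrite ler_pdivlMr //; lra.
- by rewrite mulr0 addr0 scale0r addr0; exact: w_min.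
Qed.

Hypothesis q0 : q 0 = 0.

Lemma convex_linear_minorant : exists w, forall d, dotp w d <= q d.
Proof.
suff /(_ n (leqnn n)) [w w_min] : forall k, (k <= n)%N ->
    exists w, forall d, supported_below k d -> dotp w d <= q d.
  by exists w => d; apply: w_min => i; rewrite leqNgt ltn_ord.
elim=> [_|k IH kn].
  exists 0 => d d0; have -> : d = 0 by apply/rowP => i; rewrite d0 // mxE.
  by rewrite dotp0r q0.
by have [w w_min] := IH (ltnW kn); exact: minorant_extend w_min.
Qed.

End ConvexMinorant.

Lemma subdiff_convex_nonempty (R : realType) (n : nat) (h : 'rV[R]_n -> R) x :
  convex_funR h -> exists w, subdiff h x w.
Proof.
move=> h_convex; pose q d := h (x + d) - h x.
have q_convex : convex_funR q.
  move=> a b t t0 t1; rewrite /q.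
  have -> : x + (t *: a + (1 - t) *: b) = t *: (x + a) + (1 - t) *: (x + b).
    by rewrite !scalerDr addrACA -scalerDl subrKC scale1r.
  have := h_convex (x + a) (x + b) t t0 t1; lra.
have [|w w_min] := convex_linear_minorant q_convex; first by rewrite /q addr0 subrr.
by exists w => y; have := w_min (y - x); rewrite /q subrKC; lra.
Qed.

Lemma sqr_div_expand (R : fieldType) (c F G : R) : G != 0 ->
  F ^+ 2 / G = 2 * c * F - c ^+ 2 * G + (F - c * G) ^+ 2 / G.
Proof. by move=> G0; field. Qed.

Lemma sqr_sub_div_le (R : realFieldType) (a b c t A B G G0 : R) :
  0 < G0 -> G0 <= 2 * G -> 0 <= c -> `|a| <= t * A -> `|b| <= t * B ->
  (a - c * b) ^+ 2 / G <= t ^+ 2 * (2 * (A + c * B) ^+ 2 / G0).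
Proof.
move=> G0_gt0 G0_le c_ge0 aA bB.
have G_gt0 : 0 < G by lra.
have ab_le : `|a - c * b| <= t * (A + c * B).
  rewrite (le_trans (ler_normB _ _)) // normrM (ger0_norm c_ge0) mulrDr mulrCA.
  by rewrite lerD // ler_wpM2l.
have sqr_le : (a - c * b) ^+ 2 <= (t * (A + c * B)) ^+ 2.
  by rewrite -real_normK ?num_real // ler_sqr ?nnegrE // (le_trans _ ab_le).
apply: (le_trans (_ : _ <= (t * (A + c * B)) ^+ 2 / G)).
  by rewrite ler_pM2r ?invr_gt0.
rewrite exprMn -[leLHS]mulrA; apply: ler_wpM2l; first by rewrite sqr_ge0.
rewrite ler_pdivrMr // mulrAC ler_pdivlMr //.
by have := sqr_ge0 (A + c * B); nra.
Qed.

Lemma convex_increment_bound (R : realType) (n : nat) (f : 'rV[R]_n -> R) x d t :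
  convex_funR f -> 0 < t -> t <= 1 ->
  `|f (t *: d + x) - f x| <= t * (`|f (x + d) - f x| + `|f x - f (x - d)|).
Proof.
move=> f_convex t_gt0 t_le1.
have upper : f (t *: d + x) - f x <= t * (f (x + d) - f x).
  have := f_convex (x + d) x t (ltW t_gt0) t_le1.
  have -> : t *: (x + d) + (1 - t) *: x = t *: d + x.
    by apply/rowP => i; rewrite !mxE; ring.
  lra.
have lower : t * (f x - f (x - d)) <= f (t *: d + x) - f x.
  have tp : 0 < 1 + t by lra.
  have := f_convex (t *: d + x) (x - d) (1 + t)^-1.
  have -> : (1 + t)^-1 *: (t *: d + x) + (1 - (1 + t)^-1) *: (x - d) = x.
    by apply/rowP => i; rewrite !mxE; field; rewrite gt_eqF.
  rewrite invr_ge0 ltW // invf_le1 // lerDl ltW // => /(_ isT isT).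
  move=> /(ler_wpM2l (ltW tp)); rewrite mulrDr !mulrA divff ?gt_eqF // mul1r.
  have -> : (1 + t) * (1 - (1 + t)^-1) = t by field; rewrite gt_eqF.
  lra.
rewrite ler_norml; apply/andP; split.
- apply: le_trans lower; rewrite -mulrN; apply: ler_wpM2l; first exact: ltW.
  have := ler_norm (- (f x - f (x - d))); rewrite normrN.
  have := normr_ge0 (f (x + d) - f x); lra.
- apply: le_trans upper _; apply: ler_wpM2l; first exact: ltW.
  have := ler_norm (f (x + d) - f x); have := normr_ge0 (f x - f (x - d)); lra.
Qed.

Lemma derivable_increment_le (R : realType) (V : normedModType R) (g : V -> R) x d :
  derivable g x d ->
  \forall t \near 0^'+, `|g (t *: d + x) - g x| <= t * (`|'D_d g x| + 1).
Proof.
move=> g_der.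
have g_quot : t^-1 * (g (t *: d + x) - g x) @[t --> 0^'+] --> 'D_d g x.
  exact: cvg_dnbhs_at_right.
near=> t.
have t_gt0 : 0 < t by near: t; exact: nbhs_right_gt.
have : `|'D_d g x - t^-1 * (g (t *: d + x) - g x)| < 1.
  by near: t; apply: (cvgr_dist_lt _ _ g_quot _ ltr01).
set q := t^-1 * _ => q_near.
have -> : g (t *: d + x) - g x = t * q by rewrite mulVKf ?lt0r_neq0.
rewrite normrM (gtr0_norm t_gt0) ler_pM2l //.
have := ler_normB ('D_d g x) ('D_d g x - q).
by rewrite (_ : _ - (_ - q) = q); [lra | ring].
Unshelve. all: by end_near.
Qed.

Section LocalMinimizer.
Variables (R : realType) (n : nat).
Variables (f g h1 h2 : 'rV[R]_n -> R) (C : set 'rV[R]_n) (xs w : 'rV[R]_n) (e : R).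
Hypotheses (C_convex : convex_setR C) (f_convex : convex_funR f).
Hypotheses (g_diff : differentiable g xs) (h1_diff : differentiable h1 xs).
Hypotheses (w_subgrad : subdiff h2 xs w) (C_xs : C xs).
Hypotheses (f_xs_ge0 : 0 <= f xs) (g_xs_gt0 : 0 < g xs).
Hypothesis xs_min : forall x, C x -> g x != 0 -> `|x - xs| < e ->
  f xs ^+ 2 / g xs + h1 xs - h2 xs <= f x ^+ 2 / g x + h1 x - h2 x.

Local Notation cs := (f xs / g xs).

Lemma cs_ge0 : 0 <= cs.
Proof. by rewrite divr_ge0 // ltW. Qed.

Lemma local_min_secant y z t : C y -> 0 < t -> t <= 1 ->
  z = t *: (y - xs) + xs -> `|z - xs| < e -> 0 < g z ->
  0 <= t * (2 * cs * (f y - f xs) - dotp w (y - xs)) - cs ^+ 2 * (g z - g xs)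
       + (h1 z - h1 xs) + (f z - cs * g z) ^+ 2 / g z.
Proof.
move=> Cy t_gt0 t_le1 zE z_near gz_gt0.
have z_mix : z = t *: y + (1 - t) *: xs by rewrite zE; apply/rowP => i; rewrite !mxE; ring.
have Cz : C z by rewrite z_mix; apply: C_convex => //; exact: ltW.
have := xs_min Cz (lt0r_neq0 gz_gt0) z_near.
rewrite (sqr_div_expand cs (f z) (lt0r_neq0 gz_gt0)).
rewrite (sqr_div_expand cs (f xs) (lt0r_neq0 g_xs_gt0)) divfK ?lt0r_neq0 // subrr.
rewrite expr0n /= mul0r addr0 => min_z.
have := w_subgrad z; rewrite [in z - xs]zE addrK dotpZr => h2_z.
have := f_convex y xs (ltW t_gt0) t_le1; rewrite -z_mix.
move=> /(ler_wpM2l (mulr_ge0 (ler0n _ 2) cs_ge0)) f_z.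
lra.
Qed.

Hypothesis e_gt0 : 0 < e.

Lemma local_min_quotient_ge y : C y -> exists K, \forall t \near 0^'+,
  0 <= 2 * cs * (f y - f xs) - dotp w (y - xs)
       - cs ^+ 2 * (t^-1 * (g (t *: (y - xs) + xs) - g xs))
       + t^-1 * (h1 (t *: (y - xs) + xs) - h1 xs) + t * K.
Proof.
move=> Cy; set d := y - xs.
pose A := `|f (xs + d) - f xs| + `|f xs - f (xs - d)|.
pose B := `|'D_d g xs| + 1.
exists (2 * (A + cs * B) ^+ 2 / g xs).
have B_gt0 : 0 < B by rewrite ltr_pwDr.
have d1_gt0 : 0 < `|d| + 1 by rewrite ltr_pwDr.
near=> t.
have t_gt0 : 0 < t by near: t; exact: nbhs_right_gt.
have t_le1 : t <= 1 by apply: ltW; near: t; exact: nbhs_right_lt.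
have t_small : t * (`|d| + 1) < e.
  by rewrite -ltr_pdivlMr //; near: t; apply: nbhs_right_lt; rewrite divr_gt0.
have t_B : t * B < g xs / 2.
  by rewrite -ltr_pdivlMr //; near: t; apply: nbhs_right_lt; rewrite !divr_gt0.
have g_inc : `|g (t *: d + xs) - g xs| <= t * B.
  by near: t; exact: derivable_increment_le (@diff_derivable _ _ _ g xs d g_diff).
have z_near : `|t *: d + xs - xs| < e.
  by rewrite addrK normrZ gtr0_norm //; move: t_small; rewrite mulrDr mulr1; lra.
have gz_le : g xs <= 2 * g (t *: d + xs).
  by move: g_inc; rewrite ler_norml => /andP[]; lra.
have gz_gt0 : 0 < g (t *: d + xs) by move: g_xs_gt0; lra.
have sec := local_min_secant Cy t_gt0 t_le1 erefl z_near gz_gt0.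
have rem := sqr_sub_div_le g_xs_gt0 gz_le cs_ge0
              (convex_increment_bound xs d f_convex t_gt0 t_le1) g_inc.
have f_split : f (t *: d + xs) - cs * g (t *: d + xs) =
               (f (t *: d + xs) - f xs) - cs * (g (t *: d + xs) - g xs).
  by rewrite mulrBr divfK ?lt0r_neq0 //; ring.
rewrite -/d f_split in sec; rewrite -(pmulr_rge0 _ t_gt0).
set K := 2 * _ / g xs in rem *; set X := 2 * cs * _ - _ in sec *.
set Gz := g _ - g xs in sec rem *; set Hz := h1 _ - h1 xs in sec *.
have -> : t * (X - cs ^+ 2 * (t^-1 * Gz) + t^-1 * Hz + t * K) =
          t * X - cs ^+ 2 * Gz + Hz + t ^+ 2 * K.
  by field; rewrite !lt0r_neq0.
lra.
Unshelve. all: by end_near.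
Qed.

Lemma local_min_first_order y : C y ->
  0 <= 2 * cs * (f y - f xs) - dotp w (y - xs)
       - cs ^+ 2 * 'D_(y - xs) g xs + 'D_(y - xs) h1 xs.
Proof.
move=> Cy; have [K quot_ge] := local_min_quotient_ge Cy.
have quot_cvg h : differentiable h xs ->
    t^-1 * (h (t *: (y - xs) + xs) - h xs) @[t --> 0^'+] --> 'D_(y - xs) h xs.
  by move=> h_diff; exact: cvg_dnbhs_at_right (@diff_derivable _ _ _ h xs _ h_diff).
set c0 := 2 * cs * _ - _ in quot_ge *.
have : c0 - cs ^+ 2 * (t^-1 * (g (t *: (y - xs) + xs) - g xs))
       + t^-1 * (h1 (t *: (y - xs) + xs) - h1 xs) + t * K @[t --> 0^'+] -->
       c0 - cs ^+ 2 * 'D_(y - xs) g xs + 'D_(y - xs) h1 xs + 0 * K.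
  apply: cvgD; last by apply: cvgMr_tmp; exact: cvg_at_right_filter.
  apply: cvgD; last exact: quot_cvg.
  by apply: cvgB; [exact: cvg_cst | apply: cvgMl_tmp; exact: quot_cvg].
by rewrite mul0r addr0 => /cvgr_to_ge; apply.
Qed.

End LocalMinimizer.

Theorem theorem4p1 (R : realType) (n : nat)
  (f g h1 h2 : 'rV[R]_n -> R) (C : set 'rV[R]_n) (xs : 'rV[R]_n) :
  (forall x, 0 <= f x) -> (forall x, 0 <= g x) ->
  closed C -> convex_setR C ->
  (exists x, C x /\ g x != 0) ->
  convex_funR f ->
  (forall x, differentiable g x) -> locally_lipschitz (grad g) ->
  (forall x, differentiable h1 x) -> locally_lipschitz (grad h1) ->
  convex_funR h2 ->
  (* xs is a local minimizer of f^2/g + h1 - h2 over C ∩ {g <> 0} *)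
  (C xs /\ g xs != 0 /\
   exists2 e : R, 0 < e & forall x, C x -> g x != 0 -> `|x - xs| < e ->
     f xs ^+ 2 / g xs + h1 xs - h2 xs <= f x ^+ 2 / g x + h1 x - h2 x) ->
  let cs := f xs / g xs in
  exists u, exists w,
    subdiff_plus_ind (fun x => 2 * cs * f x) C xs u /\ subdiff h2 xs w /\
    u - cs ^+ 2 *: grad g xs + grad h1 xs - w = 0.
Proof.
move=> f_ge0 g_ge0 _ C_convex _ f_convex g_diff _ h1_diff _ h2_convex.
move=> [C_xs [g_xs_neq0 [e e_gt0 xs_min]]] cs.
have g_xs_gt0 : 0 < g xs by rewrite lt_def g_xs_neq0 g_ge0.
have [w w_subgrad] := subdiff_convex_nonempty xs h2_convex.
exists (cs ^+ 2 *: grad g xs - grad h1 xs + w), w; split; last split => //.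
- split => // y C_y.
  have := local_min_first_order C_convex f_convex (g_diff xs) (h1_diff xs)
            w_subgrad C_xs (f_ge0 xs) g_xs_gt0 xs_min e_gt0 C_y.
  by rewrite !derive_grad // !dotpDl dotpZl dotpNl -/cs; lra.
- by apply/rowP => i; rewrite !mxE; ring.
Qed.
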